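(* Let $\mathbb{C}$ be a regular majority category. Then for any three reflexive relations $A,B,C$ on any object $X$ of $\mathbb{C}$, $(A\circ B)\cap(A\circ C)\leqslant A\circ(B\cap C)$.
   Context: A category is regular if it has finite limits and coequalizers of kernel pairs and regular epimorphisms are pullback-stable; morphisms factor as regular epi followed by mono. Relations on $X$ are subobjects of $X\times X$, reflexive if the diagonal factors through them; $\cap$ is intersection (pullback) of subobjects, $\leqslant$ the order on subobjects. For $w:S\to W$ and a subobject $A$ of $W$, $w\in_S A$ means $w$ factors through a representative of $A$. The composite $R\circ S$ of relations represented by $(r_1,r_2):R_0\to X\times Y$ and $(s_1,s_2):S_0\to Y\times Z$ is the image of $(r_1p_1,s_2p_2):P\to X\times Z$, $(P,p_1,p_2)$ the pullback of $s_1$ along $r_2$. A ternary relation $R\leqslant X\times Y\times Z$ is majority-selecting if for all $S$ and $x,x':S\to X$, $y,y':S\to Y$, $z,z':S\to Z$: $(x,y,z')\in_S R$, $(x,y',z)\in_S R$, $(x',y,z)\in_S R$ imply $(x,y,z)\in_S R$. A category with products is a majority category if all its ternary relations are majority-selecting. *)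

Set Implicit Arguments.
Unset Strict Implicit.

Record Category := {
  Ob :> Type;
  Hom : Ob -> Ob -> Type;
  idm : forall X, Hom X X;
  comp : forall X Y Z, Hom Y Z -> Hom X Y -> Hom X Z;
  comp_assoc : forall X Y Z W (h : Hom Z W) (g : Hom Y Z) (f : Hom X Y),
      comp h (comp g f) = comp (comp h g) f;
  comp_id_l : forall X Y (f : Hom X Y), comp (idm Y) f = f;
  comp_id_r : forall X Y (f : Hom X Y), comp f (idm X) = f
}.

Arguments Hom {c} X Y.
Arguments idm {c} X.
Arguments comp {c X Y Z} _ _.
Notation "g \o f" := (comp g f) (at level 40, left associativity).

Section Notions.
Variable C : Category.

Definition mono {A B : C} (m : Hom A B) : Prop :=
  forall Z (g h : Hom Z A), m \o g = m \o h -> g = h.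

Definition is_terminal (T : C) : Prop :=
  forall Z : C, exists f : Hom Z T, forall g : Hom Z T, g = f.

Definition is_pullback {A B Z P : C} (f : Hom A Z) (g : Hom B Z)
    (p1 : Hom P A) (p2 : Hom P B) : Prop :=
  f \o p1 = g \o p2 /\
  forall W (u : Hom W A) (v : Hom W B), f \o u = g \o v ->
    exists h : Hom W P, (p1 \o h = u /\ p2 \o h = v) /\
      forall h' : Hom W P, p1 \o h' = u -> p2 \o h' = v -> h' = h.

Definition is_coequalizer {A B Q : C} (f g : Hom A B) (q : Hom B Q) : Prop :=
  q \o f = q \o g /\
  forall W (u : Hom B W), u \o f = u \o g ->
    exists h : Hom Q W, h \o q = u /\ forall h' : Hom Q W, h' \o q = u -> h' = h.

Definition regular_epi {B Q : C} (e : Hom B Q) : Prop :=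
  exists (A : C) (f g : Hom A B), is_coequalizer f g e.

Definition is_product {X Y P : C} (p1 : Hom P X) (p2 : Hom P Y) : Prop :=
  forall W (f : Hom W X) (g : Hom W Y),
    exists h : Hom W P, (p1 \o h = f /\ p2 \o h = g) /\
      forall h' : Hom W P, p1 \o h' = f -> p2 \o h' = g -> h' = h.

Definition is_product3 {X Y Z P : C} (q1 : Hom P X) (q2 : Hom P Y)
    (q3 : Hom P Z) : Prop :=
  forall W (f : Hom W X) (g : Hom W Y) (k : Hom W Z),
    exists h : Hom W P, (q1 \o h = f /\ q2 \o h = g /\ q3 \o h = k) /\
      forall h' : Hom W P, q1 \o h' = f -> q2 \o h' = g -> q3 \o h' = k -> h' = h.

(* Regular category: finite limits (terminal object + pullbacks),
   coequalizers of kernel pairs, pullback-stable regular epimorphisms. *)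
Definition regular_category : Prop :=
  (exists T : C, is_terminal T) /\
  (forall (A B Z : C) (f : Hom A Z) (g : Hom B Z),
     exists (P : C) (p1 : Hom P A) (p2 : Hom P B), is_pullback f g p1 p2) /\
  (forall (A B K : C) (f : Hom A B) (k1 k2 : Hom K A),
     is_pullback f f k1 k2 -> exists (Q : C) (q : Hom A Q), is_coequalizer k1 k2 q) /\
  (forall (A B B' P : C) (e : Hom A B) (g : Hom B' B) (p1 : Hom P A) (p2 : Hom P B'),
     regular_epi e -> is_pullback e g p1 p2 -> regular_epi p2).

Definition gen_in {S W M : C} (w : Hom S W) (m : Hom M W) : Prop :=
  exists u : Hom S M, m \o u = w.

Definition subobj_le {W M N : C} (m : Hom M W) (n : Hom N W) : Prop :=
  gen_in m n.

Definition in3 {X Y Z P R0 S : C} (q1 : Hom P X) (q2 : Hom P Y) (q3 : Hom P Z)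
    (r : Hom R0 P) (x : Hom S X) (y : Hom S Y) (z : Hom S Z) : Prop :=
  exists u : Hom S R0, q1 \o (r \o u) = x /\ q2 \o (r \o u) = y /\ q3 \o (r \o u) = z.

Definition majority_selecting {X Y Z P R0 : C} (q1 : Hom P X) (q2 : Hom P Y)
    (q3 : Hom P Z) (r : Hom R0 P) : Prop :=
  forall (S : C) (x x' : Hom S X) (y y' : Hom S Y) (z z' : Hom S Z),
    in3 q1 q2 q3 r x y z' -> in3 q1 q2 q3 r x y' z -> in3 q1 q2 q3 r x' y z ->
    in3 q1 q2 q3 r x y z.

Definition majority_category : Prop :=
  forall (X Y Z P R0 : C) (q1 : Hom P X) (q2 : Hom P Y) (q3 : Hom P Z)
         (r : Hom R0 P),
    is_product3 q1 q2 q3 -> mono r -> majority_selecting q1 q2 q3 r.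

(* Relations on X: monos into a fixed product (P, p1, p2) of X with X. *)
Definition reflexive_rel {X P R0 : C} (p1 p2 : Hom P X) (r : Hom R0 P) : Prop :=
  exists u : Hom X R0, p1 \o (r \o u) = idm X /\ p2 \o (r \o u) = idm X.

(* t represents the composite relation R o S (R = r, S = s): the image
   (regular epi / mono factorization) of (r1 q1, s2 q2) : Pb -> X x X,
   where (Pb, q1, q2) is the pullback of s1 along r2. *)
Definition is_composite {X P R0 S0 T0 : C} (p1 p2 : Hom P X)
    (r : Hom R0 P) (s : Hom S0 P) (t : Hom T0 P) : Prop :=
  mono t /\
  exists (Pb : C) (q1 : Hom Pb R0) (q2 : Hom Pb S0) (e : Hom Pb T0),
    is_pullback (p2 \o r) (p1 \o s) q1 q2 /\ regular_epi e /\
    p1 \o (t \o e) = p1 \o (r \o q1) /\ p2 \o (t \o e) = p2 \o (s \o q2).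

End Notions.

(* Read relations through generalized elements: in a regular category an
   existential witness is only available after pulling back along a regular
   epimorphism, which is harmless for membership in a subobject since monos
   are orthogonal to regular epis.  Given x A y, y B z and x A y', y' C z,
   consider the image R in X^3 of the object of forks {(x, y, z) | exists w,
   x A w, w B y, w C z}.  Then (x, z, y) is in R via w = y, (x, y', z) via
   w = y', and (z, z, z) via w = z, using reflexivity of A, B and C; the
   majority property yields (x, z, z) in R, i.e. locally x A w, w B z and
   w C z, so that x A o (B /\ C) z. *)


Set Implicit Arguments.
Unset Strict Implicit.

Definition locally {C : Category} {S : C} (P : forall S' : C, Hom S' S -> Prop) : Prop :=
  exists (S' : C) (e : Hom S' S), regular_epi e /\ P S' e.

Section Morphisms.
Variable C : Category.

Lemma regular_epi_epi {B Q : C} (e : Hom B Q) :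
  regular_epi e -> forall W (g h : Hom Q W), g \o e = h \o e -> g = h.
Proof.
  intros [A [f1 [f2 [Hcoeq Huniv]]]] W g h Hgh.
  destruct (Huniv W (g \o e)) as [k [_ Hk]].
  { rewrite <- !comp_assoc, Hcoeq. reflexivity. }
  rewrite (Hk g eq_refl), (Hk h (eq_sym Hgh)). reflexivity.
Qed.

Lemma gen_in_descent {S T M W : C} (e : Hom S T) (g : Hom T W) (m : Hom M W) :
  regular_epi e -> mono m -> gen_in (g \o e) m -> gen_in g m.
Proof.
  intros He Hm [v Hv]. pose proof He as [A [f1 [f2 [Hcoeq Huniv]]]].
  destruct (Huniv M v) as [h [Hh _]].
  { apply Hm. rewrite !comp_assoc, Hv, <- !comp_assoc, Hcoeq. reflexivity. }
  exists h. apply (regular_epi_epi He). rewrite <- comp_assoc, Hh. exact Hv.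
Qed.

Lemma product_jointly_mono {X Y P : C} (p1 : Hom P X) (p2 : Hom P Y) :
  is_product p1 p2 ->
  forall W (f g : Hom W P), p1 \o f = p1 \o g -> p2 \o f = p2 \o g -> f = g.
Proof.
  intros Hp W f g H1 H2. destruct (Hp W (p1 \o f) (p2 \o f)) as [h [_ Hh]].
  rewrite (Hh f eq_refl eq_refl), (Hh g (eq_sym H1) (eq_sym H2)). reflexivity.
Qed.

Lemma pullback_jointly_mono {A B Z P : C} (f : Hom A Z) (g : Hom B Z)
    (p1 : Hom P A) (p2 : Hom P B) :
  is_pullback f g p1 p2 ->
  forall W (h h' : Hom W P), p1 \o h = p1 \o h' -> p2 \o h = p2 \o h' -> h = h'.
Proof.
  intros [Hsq Huniv] W h h' H1 H2.
  destruct (Huniv W (p1 \o h) (p2 \o h)) as [k [_ Hk]].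
  { rewrite !comp_assoc, Hsq. reflexivity. }
  rewrite (Hk h eq_refl eq_refl), (Hk h' (eq_sym H1) (eq_sym H2)). reflexivity.
Qed.

End Morphisms.

Section Regular.
Variable C : Category.
Hypothesis HR : regular_category C.

Lemma regular_epi_locally_surjective {A B B' : C} (e : Hom A B) (g : Hom B' B) :
  regular_epi e -> locally (fun _ e' => gen_in (g \o e') e).
Proof.
  intros He. destruct HR as [_ [Hpb [_ Hstable]]].
  destruct (Hpb _ _ _ e g) as [P [s [e' Hsq]]].
  exists P, e'. split; [exact (Hstable _ _ _ _ _ _ _ _ He Hsq) | exists s; apply Hsq].
Qed.

Lemma kernel_pair_coequalizer_mono {A B K Q : C} (f : Hom A B) (k1 k2 : Hom K A)
    (q : Hom A Q) (m : Hom Q B) :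
  is_pullback f f k1 k2 -> is_coequalizer k1 k2 q -> m \o q = f -> mono m.
Proof.
  intros [_ Hkp] Hcoeq Hmq W u v Huv.
  assert (Hq : regular_epi q) by (exists K, k1, k2; exact Hcoeq).
  destruct (regular_epi_locally_surjective u Hq) as [S1 [e1 [He1 [a1 Ha1]]]].
  destruct (regular_epi_locally_surjective (v \o e1) Hq) as [S2 [e2 [He2 [a2 Ha2]]]].
  destruct (Hkp S2 (a1 \o e2) a2) as [h [[Hh1 Hh2] _]].
  { rewrite <- Hmq, <- !comp_assoc, (comp_assoc q a1 e2), Ha1, Ha2, !comp_assoc, Huv.
    reflexivity. }
  apply (regular_epi_epi He1), (regular_epi_epi He2).
  rewrite <- Ha1, <- Ha2, <- comp_assoc, <- Hh1, <- Hh2, !comp_assoc, (proj1 Hcoeq).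
  reflexivity.
Qed.

Lemma image_factorization {A B : C} (f : Hom A B) :
  exists (I : C) (q : Hom A I) (m : Hom I B), regular_epi q /\ mono m /\ m \o q = f.
Proof.
  destruct HR as [_ [Hpb [Hcoeq _]]].
  destruct (Hpb _ _ _ f f) as [K [k1 [k2 Hkp]]].
  destruct (Hcoeq _ _ _ f k1 k2 Hkp) as [I [q Hq]].
  destruct (proj2 Hq B f (proj1 Hkp)) as [m [Hmq _]].
  exists I, q, m. split; [exists K, k1, k2; exact Hq |].
  split; [exact (kernel_pair_coequalizer_mono Hkp Hq Hmq) | exact Hmq].
Qed.

Lemma product3_of_product {X P : C} (p1 p2 : Hom P X) : is_product p1 p2 ->
  exists (T : C) (t1 t2 : Hom T P), is_product3 (p1 \o t1) (p2 \o t1) (p2 \o t2).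
Proof.
  intros Hp. destruct HR as [_ [Hpb _]].
  destruct (Hpb _ _ _ p1 p1) as [T [t1 [t2 Ht]]].
  exists T, t1, t2. intros W x y z.
  destruct (Hp W x y) as [h1 [[Hh1x Hh1y] _]].
  destruct (Hp W x z) as [h2 [[Hh2x Hh2z] _]].
  destruct (proj2 Ht W h1 h2) as [h [[Hh1 Hh2] _]]; [congruence |].
  exists h. split.
  - rewrite <- !comp_assoc, Hh1, Hh2. repeat split; assumption.
  - intros h' H1 H2 H3. rewrite <- !comp_assoc in H1, H2, H3.
    apply (pullback_jointly_mono Ht).
    + rewrite Hh1. apply (product_jointly_mono Hp); congruence.
    + rewrite Hh2. apply (product_jointly_mono Hp); [| congruence].
      rewrite Hh2x, <- H1, !comp_assoc, (proj1 Ht). reflexivity.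
Qed.

End Regular.

Section Relations.
Variables (C : Category) (X P : C) (p1 p2 : Hom P X).
Hypothesis Hp : is_product p1 p2.
Hypothesis HR : regular_category C.

Definition rel_mem {R0 S : C} (r : Hom R0 P) (x y : Hom S X) : Prop :=
  exists u : Hom S R0, p1 \o r \o u = x /\ p2 \o r \o u = y.

Definition fork {A0 B0 C0 S : C} (a : Hom A0 P) (b : Hom B0 P) (c : Hom C0 P)
    (x y z : Hom S X) : Prop :=
  exists w, rel_mem a x w /\ rel_mem b w y /\ rel_mem c w z.

Lemma rel_mem_self {R0 : C} (r : Hom R0 P) : rel_mem r (p1 \o r) (p2 \o r).
Proof. exists (idm R0). rewrite !comp_id_r. split; reflexivity. Qed.

Lemma rel_mem_precomp {R0 S S' : C} (r : Hom R0 P) (x y : Hom S X) (f : Hom S' S) :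
  rel_mem r x y -> rel_mem r (x \o f) (y \o f).
Proof.
  intros [u [Hx Hy]]. exists (u \o f). rewrite !comp_assoc, Hx, Hy. split; reflexivity.
Qed.

Lemma rel_mem_le {R0 R1 S : C} (r : Hom R0 P) (s : Hom R1 P) (x y : Hom S X) :
  subobj_le r s -> rel_mem r x y -> rel_mem s x y.
Proof.
  intros [v Hv] [u [Hx Hy]]. subst r. exists (v \o u).
  rewrite !comp_assoc in *. split; assumption.
Qed.

Lemma rel_mem_refl {R0 S : C} (r : Hom R0 P) (x : Hom S X) :
  reflexive_rel p1 p2 r -> rel_mem r x x.
Proof.
  intros [u [H1 H2]]. exists (u \o x). rewrite comp_assoc in H1, H2.
  rewrite !comp_assoc, H1, H2, comp_id_l. split; reflexivity.
Qed.

Lemma rel_mem_gen_in {R0 S : C} (r : Hom R0 P) (w : Hom S P) :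
  rel_mem r (p1 \o w) (p2 \o w) -> gen_in w r.
Proof.
  intros [u [H1 H2]]. exists u.
  apply (product_jointly_mono Hp); rewrite comp_assoc; assumption.
Qed.

Lemma rel_mem_descent {R0 S S' : C} (r : Hom R0 P) (e : Hom S' S) (x y : Hom S X) :
  regular_epi e -> mono r -> rel_mem r (x \o e) (y \o e) -> rel_mem r x y.
Proof.
  intros He Hr [u [Hx Hy]].
  destruct (Hp x y) as [h [[Hhx Hhy] _]].
  assert (Hin : gen_in (h \o e) r).
  { exists u. apply (product_jointly_mono Hp); rewrite !comp_assoc; congruence. }
  destruct (gen_in_descent He Hr Hin) as [v Hv].
  exists v. rewrite <- !comp_assoc, Hv. split; assumption.
Qed.

Lemma rel_mem_meet {B0 C0 J0 S : C} (b : Hom B0 P) (c : Hom C0 P)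
    (j1 : Hom J0 B0) (j2 : Hom J0 C0) (x y : Hom S X) :
  is_pullback b c j1 j2 -> rel_mem b x y -> rel_mem c x y -> rel_mem (b \o j1) x y.
Proof.
  intros [_ Hpb] [u [Hux Huy]] [v [Hvx Hvy]].
  destruct (Hpb S u v) as [h [[Hh1 _] _]].
  { apply (product_jointly_mono Hp); rewrite !comp_assoc; congruence. }
  exists h. rewrite <- !comp_assoc, Hh1, !comp_assoc. split; assumption.
Qed.

Section Composite.
Variables (A0 B0 T0 : C) (a : Hom A0 P) (b : Hom B0 P) (t : Hom T0 P).
Hypothesis Ht : is_composite p1 p2 a b t.

Lemma rel_mem_composite {S : C} (x y z : Hom S X) :
  rel_mem a x y -> rel_mem b y z -> rel_mem t x z.
Proof.
  destruct Ht as [_ [Pb [q1 [q2 [e [[_ Hpb] [_ [He1 He2]]]]]]]].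
  intros [u [Hux Huy]] [v [Hvy Hvz]].
  destruct (Hpb S u v) as [h [[Hh1 Hh2] _]]; [congruence |].
  exists (e \o h). rewrite !comp_assoc in He1, He2 |- *.
  rewrite He1, He2, <- !comp_assoc, Hh1, Hh2, !comp_assoc. split; assumption.
Qed.

Lemma rel_mem_composite_inv {S : C} (x z : Hom S X) :
  rel_mem t x z ->
  locally (fun _ e => exists y, rel_mem a (x \o e) y /\ rel_mem b y (z \o e)).
Proof.
  destruct Ht as [_ [Pb [q1 [q2 [e [[Hsq _] [He [He1 He2]]]]]]]].
  intros [u [Hux Huz]]. subst x z.
  destruct (regular_epi_locally_surjective HR u He) as [S' [e' [He' [s Hs]]]].
  exists S', e'. split; [exact He' |].
  rewrite !comp_assoc in He1, He2.
  exists (p2 \o a \o q1 \o s). split.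
  - exists (q1 \o s). rewrite !comp_assoc, <- He1, <- !comp_assoc, Hs.
    split; reflexivity.
  - exists (q2 \o s). rewrite !comp_assoc, <- Hsq, <- He2, <- !comp_assoc, Hs.
    split; reflexivity.
Qed.

End Composite.
End Relations.

Section Forks.
Variables (C : Category) (X P : C) (p1 p2 : Hom P X).
Hypothesis Hp : is_product p1 p2.
Hypothesis HR : regular_category C.
Variables (A0 B0 C0 : C) (a : Hom A0 P) (b : Hom B0 P) (c : Hom C0 P).

Lemma fork_object_exists :
  exists (Q : C) (α : Hom Q A0) (β : Hom Q B0) (γ : Hom Q C0),
    (forall S (v : Hom S Q),
       fork p1 p2 a b c (p1 \o a \o α \o v) (p2 \o b \o β \o v) (p2 \o c \o γ \o v)) /\
    (forall S (x y z : Hom S X), fork p1 p2 a b c x y z ->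
       exists v : Hom S Q,
         p1 \o a \o α \o v = x /\ p2 \o b \o β \o v = y /\ p2 \o c \o γ \o v = z).
Proof.
  destruct HR as [_ [Hpb _]].
  destruct (Hpb _ _ _ (p2 \o a) (p1 \o b)) as [Q1 [r1 [r2 [Hsq1 Hpb1]]]].
  destruct (Hpb _ _ _ (p1 \o b \o r2) (p1 \o c)) as [Q [s1 [s2 [Hsq Hpb2]]]].
  exists Q, (r1 \o s1), (r2 \o s1), s2. split.
  - intros S v. exists (p2 \o a \o r1 \o s1 \o v). split; [| split].
    + exists (r1 \o s1 \o v). rewrite !comp_assoc. split; reflexivity.
    + exists (r2 \o s1 \o v). rewrite !comp_assoc, <- Hsq1. split; reflexivity.
    + exists (s2 \o v). rewrite !comp_assoc, <- Hsq, <- Hsq1.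
      split; reflexivity.
  - intros S x y z [w [[u [Hux Huw]] [[v [Hvw Hvy]] [k [Hkw Hkz]]]]].
    destruct (Hpb1 S u v) as [h1 [[Hh1u Hh1v] _]]; [congruence |].
    destruct (Hpb2 S h1 k) as [h [[Hh Hhk] _]].
    { rewrite <- !comp_assoc, Hh1v, !comp_assoc. congruence. }
    exists h. rewrite <- !comp_assoc, Hh, Hhk, Hh1u, Hh1v, !comp_assoc.
    repeat split; assumption.
Qed.

Lemma fork_relation_exists :
  exists (T R0 : C) (q1 q2 q3 : Hom T X) (m : Hom R0 T),
    is_product3 q1 q2 q3 /\ mono m /\
    (forall S (x y z : Hom S X), fork p1 p2 a b c x y z -> in3 q1 q2 q3 m x y z) /\
    (forall S (x y z : Hom S X), in3 q1 q2 q3 m x y z ->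
       locally (fun _ e => fork p1 p2 a b c (x \o e) (y \o e) (z \o e))).
Proof.
  destruct fork_object_exists as [Q [α [β [γ [Hfork Hlift]]]]].
  destruct (product3_of_product HR Hp) as [T [t1 [t2 HT]]].
  destruct (HT Q (p1 \o a \o α) (p2 \o b \o β) (p2 \o c \o γ))
    as [f [[Hf1 [Hf2 Hf3]] _]].
  destruct (image_factorization HR f) as [R0 [q [m [Hq [Hm Hmq]]]]].
  subst f. rewrite !comp_assoc in Hf1, Hf2, Hf3.
  exists T, R0, (p1 \o t1), (p2 \o t1), (p2 \o t2), m.
  split; [exact HT |]. split; [exact Hm |]. split.
  - intros S x y z Hxyz. destruct (Hlift S x y z Hxyz) as [v [Hx [Hy Hz]]].
    exists (q \o v). subst x y z. rewrite !comp_assoc, Hf1, Hf2, Hf3.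
    repeat split; reflexivity.
  - intros S x y z [u [Hx [Hy Hz]]]. subst x y z.
    destruct (regular_epi_locally_surjective HR u Hq) as [S' [e [He [v Hv]]]].
    exists S', e. split; [exact He |].
    rewrite <- !comp_assoc, <- Hv, !comp_assoc, Hf1, Hf2, Hf3. apply Hfork.
Qed.

End Forks.

Lemma majority_fork {C : Category} {X P : C} (p1 p2 : Hom P X) :
  regular_category C -> majority_category C -> is_product p1 p2 ->
  forall (A0 B0 C0 S : C) (a : Hom A0 P) (b : Hom B0 P) (c : Hom C0 P)
    (x y y' z : Hom S X),
  reflexive_rel p1 p2 a -> reflexive_rel p1 p2 b -> reflexive_rel p1 p2 c ->
  rel_mem p1 p2 a x y -> rel_mem p1 p2 b y z ->
  rel_mem p1 p2 a x y' -> rel_mem p1 p2 c y' z ->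
  locally (fun _ e => fork p1 p2 a b c (x \o e) (z \o e) (z \o e)).
Proof.
  intros HR HM Hp A0 B0 C0 S a b c x y y' z Ha Hb Hc Hxy Hyz Hxy' Hy'z.
  destruct (fork_relation_exists Hp HR a b c)
    as [T [R0 [q1 [q2 [q3 [m [HT [Hm [Hin Hout]]]]]]]]].
  apply Hout, (HM _ _ _ _ _ _ _ _ _ HT Hm S x z z y' z y); apply Hin.
  - exists y. repeat split; auto using rel_mem_refl.
  - exists y'. repeat split; auto using rel_mem_refl.
  - exists z. repeat split; auto using rel_mem_refl.
Qed.

Theorem lemma3p1 (C : Category) :
  regular_category C -> majority_category C ->
  forall (X P : C) (p1 p2 : Hom P X), is_product p1 p2 ->
  forall (A0 B0 C0 : C) (a : Hom A0 P) (b : Hom B0 P) (c : Hom C0 P),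
    mono a -> mono b -> mono c ->
    reflexive_rel p1 p2 a -> reflexive_rel p1 p2 b -> reflexive_rel p1 p2 c ->
  (* AB represents A o B, AC represents A o C *)
  forall (AB0 AC0 : C) (ab : Hom AB0 P) (ac : Hom AC0 P),
    is_composite p1 p2 a b ab -> is_composite p1 p2 a c ac ->
  (* (A o B) /\ (A o C) is represented by ab \o i1 *)
  forall (I0 : C) (i1 : Hom I0 AB0) (i2 : Hom I0 AC0),
    is_pullback ab ac i1 i2 ->
  (* B /\ C is represented by b \o j1 *)
  forall (J0 : C) (j1 : Hom J0 B0) (j2 : Hom J0 C0),
    is_pullback b c j1 j2 ->
  (* A o (B /\ C) is represented by d *)
  forall (D0 : C) (d : Hom D0 P),
    is_composite p1 p2 a (b \o j1) d ->
  subobj_le (ab \o i1) d.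
Proof.
  intros HR HM X P p1 p2 Hp A0 B0 C0 a b c _ _ _ Ha Hb Hc AB0 AC0 ab ac Hab Hac
    I0 i1 i2 Hi J0 j1 j2 Hj D0 d Hd.
  set (w := ab \o i1).
  assert (Hwab : rel_mem p1 p2 ab (p1 \o w) (p2 \o w)).
  { apply (rel_mem_le (r := w)); [exists i1; reflexivity | apply rel_mem_self]. }
  assert (Hwac : rel_mem p1 p2 ac (p1 \o w) (p2 \o w)).
  { apply (rel_mem_le (r := w)); [exists i2; symmetry; apply Hi | apply rel_mem_self]. }
  destruct (rel_mem_composite_inv HR Hab Hwab) as [S1 [e1 [He1 [y [Hxy Hyz]]]]].
  destruct (rel_mem_composite_inv HR Hac (rel_mem_precomp e1 Hwac))
    as [S2 [e2 [He2 [y' [Hxy' Hy'z]]]]].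
  destruct (majority_fork HR HM Hp Ha Hb Hc (rel_mem_precomp e2 Hxy)
      (rel_mem_precomp e2 Hyz) Hxy' Hy'z)
    as [S3 [e3 [He3 [v [Hxv [Hvz Hvz']]]]]].
  apply (rel_mem_gen_in Hp).
  apply (rel_mem_descent Hp He1 (proj1 Hd)), (rel_mem_descent Hp He2 (proj1 Hd)),
    (rel_mem_descent Hp He3 (proj1 Hd)).
  apply (rel_mem_composite Hd Hxv), (rel_mem_meet Hp Hj); assumption.
Qed.
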